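(* Let $G_{n\times n}$ denote the $n\times n$ square grid graph and $\pi_{\mathrm{opt}}(G_{n\times n})$ its optimal pebbling number. Then $$\liminf_{n\to\infty}\frac{n^2}{\pi_{\mathrm{opt}}(G_{n\times n})}\ \ge\ \frac{7}{2};$$ that is, there are solvable pebble distributions on arbitrarily large square grids whose covering ratios converge to $3.5$.
   Context: A pebble distribution on a graph $G$ is a function $D:V(G)\to\mathbb{N}$; its size is $|D|=\sum_v D(v)$. A pebbling move along an edge $vu$ with $D(v)\ge 2$ removes two pebbles from $v$ and adds one pebble to $u$. A vertex $v$ is reachable under $D$ if $D(v)\ge 1$ or there is a sequence of pebbling moves whose last move places a pebble on $v$. $D$ is solvable if every vertex is reachable. The covering ratio of $D$ is the number of reachable vertices divided by $|D|$. The optimal pebbling number $\pi_{\mathrm{opt}}(G)$ is the minimum size of a solvable distribution on $G$. The $n\times n$ grid $G_{n\times n}$ is the Cartesian product of two paths on $n$ vertices. *)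

From HB Require Import structures.
From mathcomp Require Import all_boot all_order all_algebra.
From mathcomp Require Import boolp classical_sets reals constructive_ereal.
From mathcomp Require Import topology normedtype sequences.
From Stdlib Require Import Relations.

Set Implicit Arguments.
Unset Strict Implicit.
Unset Printing Implicit Defensive.

Definition distribution (V : finType) := {ffun V -> nat}.

Definition dsize (V : finType) (D : distribution V) : nat := \sum_(v : V) D v.

Definition move_result (V : finType) (D : distribution V) (v u : V) : distribution V :=
  [ffun w => if w == v then D w - 2 else if w == u then (D w).+1 else D w].

Definition pebble_step (V : finType) (e : rel V) (D D' : distribution V) : Prop :=
  exists v u, e v u /\ 2 <= D v /\ D' = move_result D v u.

Definition pebble_steps (V : finType) (e : rel V) : relation (distribution V) :=
  clos_refl_trans (distribution V) (pebble_step e).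

Definition reachable (V : finType) (e : rel V) (D : distribution V) (v : V) : Prop :=
  1 <= D v \/
  exists (D' : distribution V) (u : V), pebble_steps e D D' /\ e u v /\ 2 <= D' u.

Definition solvable (V : finType) (e : rel V) (D : distribution V) : Prop :=
  forall v, reachable e D v.

Lemma exists_solvable_size (V : finType) (e : rel V) :
  exists k, `[< exists D : distribution V, solvable e D /\ dsize D = k >].
Proof.
exists (dsize [ffun _ : V => 1]); apply/asboolP.
exists [ffun _ => 1]; split => // v; left; by rewrite ffunE.
Qed.

Definition pi_opt (V : finType) (e : rel V) : nat := ex_minn (exists_solvable_size e).

Definition path_adj (n : nat) (i j : 'I_n) : bool := (i.+1 == j) || (j.+1 == i).

Definition grid_adj (n : nat) : rel ('I_n * 'I_n) :=
  fun x y => ((x.1 == y.1) && path_adj x.2 y.2) || ((x.2 == y.2) && path_adj x.1 y.1).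

Definition pi_opt_grid (n : nat) : nat := pi_opt (@grid_adj n).

(* Put four pebbles on every point of the lattice {(x, y) : y even, x + 6y = 0 mod 7},
   which has density 1/14, and one pebble on every vertex within distance 3 of the
   boundary.  A vertex farther inside receives a pebble through moves inside the 9x9
   window centred at it; the pebbles in that window only depend on
   (y mod 2, x + 6y mod 7), so explicit move sequences for fourteen cases, checked by
   computation, show that the distribution is solvable.  Its size is 2n^2/7 + O(n),
   hence 7 pi_opt <= 2n^2 + O(n) and n^2 / pi_opt is at least 7/2 - O(1/n). *)

From HB Require Import structures.
From mathcomp Require Import all_boot all_order all_algebra.
From mathcomp Require Import boolp classical_sets reals constructive_ereal.
From mathcomp Require Import topology normedtype sequences.
From mathcomp Require Import ereal zify ring lra.
From Stdlib Require Import Relations.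

Set Implicit Arguments.
Unset Strict Implicit.
Unset Printing Implicit Defensive.

Definition plane_dist := nat -> nat -> nat.

Definition plane_move (g : plane_dist) (s t : nat * nat) : plane_dist :=
  fun a b => if (a, b) == s then g a b - 2 else if (a, b) == t then (g a b).+1 else g a b.

Definition plane_adj (s t : nat * nat) : bool :=
  ((s.1 == t.1) && ((s.2.+1 == t.2) || (t.2.+1 == s.2))) ||
  ((s.2 == t.2) && ((s.1.+1 == t.1) || (t.1.+1 == s.1))).

Definition plane_nbrs (s : nat * nat) : seq (nat * nat) :=
  [:: (s.1.+1, s.2); (s.1.-1, s.2); (s.1, s.2.+1); (s.1, s.2.-1)].

Section Window.
Variable w : nat.

Definition in_window (s : nat * nat) : bool := (s.1 < w) && (s.2 < w).

Fixpoint run_moves (g : plane_dist) (moves : seq ((nat * nat) * (nat * nat))) : option plane_dist :=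
  if moves is (s, t) :: moves' then
    if [&& in_window s, in_window t, plane_adj s t & 2 <= g s.1 s.2]
    then run_moves (plane_move g s t) moves' else None
  else Some g.

Definition feeds (g : plane_dist) (v : nat * nat) : bool :=
  has (fun t => [&& in_window t, plane_adj t v & 2 <= g t.1 t.2]) (plane_nbrs v).

End Window.

Definition on_lattice (x y : nat) : bool := (y %% 2 == 0) && ((x + 6 * y) %% 7 == 0).

Definition lattice_window (p q : nat) : plane_dist :=
  fun a b => if ((p + b) %% 2 == 0) && ((q + a + 6 * b) %% 7 == 0) then 4 else 0.

Lemma lattice_windowE i j a b :
  lattice_window (j %% 2) ((i + 6 * j) %% 7) a b = if on_lattice (i + a) (j + b) then 4 else 0.
Proof.
rewrite /lattice_window /on_lattice.
have -> : ((j %% 2 + b) %% 2 == 0) = ((j + b) %% 2 == 0) by apply/eqP/eqP; lia.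
by have -> : (((i + 6 * j) %% 7 + a + 6 * b) %% 7 == 0) = ((i + a + 6 * (j + b)) %% 7 == 0)
  by apply/eqP/eqP; lia.
Qed.

(* Indexed like [lattice_window]: p = j mod 2 and q = (i + 6 j) mod 7 for the window
   corner (i, j).  Moves are in window coordinates and aim at the centre (4, 4). *)
Definition certificate (p q : nat) : seq ((nat * nat) * (nat * nat)) :=
  match p, q with
  | 0, 0 => [:: ((4,4),(4,3)); ((4,4),(4,3))]
  | 0, 2 => [:: ((2,4),(3,4)); ((2,4),(3,4))]
  | 0, 3 => [:: ((1,4),(2,4)); ((1,4),(2,4)); ((2,4),(3,4)); ((3,6),(3,5)); ((3,6),(3,5));
                ((3,5),(3,4))]
  | 0, 4 => [:: ((0,4),(1,4)); ((0,4),(1,4)); ((1,4),(2,4)); ((2,6),(3,6)); ((2,6),(3,6));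
                ((3,6),(4,6)); ((4,8),(4,7)); ((4,8),(4,7)); ((4,7),(4,6)); ((4,6),(4,5));
                ((5,2),(5,3)); ((5,2),(5,3)); ((5,3),(5,4)); ((7,4),(6,4)); ((7,4),(6,4));
                ((6,4),(5,4))]
  | 0, 5 => [:: ((4,2),(4,3)); ((4,2),(4,3))]
  | 1, 0 => [:: ((3,3),(4,3)); ((3,3),(4,3))]
  | 1, 2 => [:: ((1,3),(2,3)); ((1,3),(2,3)); ((2,3),(3,3)); ((3,5),(4,5)); ((3,5),(4,5))]
  | 1, 3 => [:: ((2,5),(3,5)); ((2,5),(3,5)); ((3,5),(4,5)); ((4,7),(4,6)); ((4,7),(4,6));
                ((4,6),(4,5))]
  | 1, 4 => [:: ((1,5),(2,5)); ((1,5),(2,5)); ((2,5),(3,5)); ((3,7),(4,7)); ((3,7),(4,7));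
                ((4,1),(4,2)); ((4,1),(4,2)); ((4,2),(4,3)); ((4,7),(4,6)); ((6,3),(5,3));
                ((6,3),(5,3)); ((5,3),(4,3))]
  | 1, 5 => [:: ((3,1),(4,1)); ((3,1),(4,1)); ((4,1),(4,2)); ((5,3),(4,3)); ((5,3),(4,3))]
  | _, _ => [::]
  end.

Lemma certificate_valid p q : p < 2 -> q < 7 ->
  if run_moves 9 (lattice_window p q) (certificate p q) is Some g then feeds 9 g (4, 4) else false.
Proof. by case: p => [|[|]] //; case: q => [|[|[|[|[|[|[|]]]]]]] //; vm_compute. Qed.

Section Embedding.
Variables (n w i0 j0 : nat) (dflt : 'I_n * 'I_n).
Hypotheses (fit_i : i0 + w <= n) (fit_j : j0 + w <= n).

(* [dflt] is only the junk value of [insubd] outside the window. *)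

Definition embed (s : nat * nat) : 'I_n * 'I_n :=
  (insubd dflt.1 (i0 + s.1), insubd dflt.2 (j0 + s.2)).

Lemma embed_fst s : in_window w s -> (embed s).1 = i0 + s.1 :> nat.
Proof. by case/andP=> hs _; rewrite val_insubd ifT //; lia. Qed.

Lemma embed_snd s : in_window w s -> (embed s).2 = j0 + s.2 :> nat.
Proof. by case/andP=> _ hs; rewrite val_insubd ifT //; lia. Qed.

Lemma embed_eq s s' : in_window w s -> in_window w s' -> (embed s == embed s') = (s == s').
Proof.
move=> hs hs'; apply/eqP/eqP => [E|-> //].
have := embed_fst hs; have := embed_snd hs; rewrite E embed_fst // embed_snd //.
by case: s s' {hs hs' E} => [a b] [c d] /= h2 h1; congr pair; lia.
Qed.

Lemma embed_adj s t :
  in_window w s -> in_window w t -> plane_adj s t -> grid_adj (embed s) (embed t).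
Proof.
move=> hs ht; rewrite /grid_adj /path_adj -!val_eqE !embed_fst // !embed_snd //.
case: s t {hs ht} => [a b] [c d]; rewrite /plane_adj /=.
by case/orP=> /andP[/eqP-> /orP[/eqP<-|/eqP<-]]; rewrite !eqxx ?addnS ?eqxx ?orbT.
Qed.

Definition dominated (g : plane_dist) (D : distribution ('I_n * 'I_n)%type) : Prop :=
  forall s, in_window w s -> g s.1 s.2 <= D (embed s).

Lemma run_moves_sound moves g g' D : dominated g D -> run_moves w g moves = Some g' ->
  exists2 D', pebble_steps (@grid_adj n) D D' & dominated g' D'.
Proof.
elim: moves g D => [|[s t] moves IH] g D gD /=; first by case=> <-; exists D; first exact: rt_refl.
case: ifP => // /and4P[hs ht hst g2] /(IH _ (move_result D (embed s) (embed t)))[].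
  move=> [a b] hab; rewrite /plane_move ffunE !embed_eq //=.
  by have := gD _ hab; case: ifP => _; [apply: leq_sub2r | case: ifP].
move=> D' st g'D'; exists D' => //; apply: rt_trans st; apply: rt_step.
exists (embed s), (embed t); do !split; first exact: embed_adj.
exact: leq_trans g2 (gD _ hs).
Qed.

Lemma reachable_of_run moves g g' D v : dominated g D -> run_moves w g moves = Some g' ->
  in_window w v -> feeds w g' v -> reachable (@grid_adj n) D (embed v).
Proof.
move=> gD /(run_moves_sound gD)[D' st g'D'] hv /hasP[t _ /and3P[ht htv g'2]].
right; exists D', (embed t); do !split => //; first exact: embed_adj.
exact: leq_trans g'2 (g'D' _ ht).
Qed.

End Embedding.

Definition in_border (n x y : nat) : bool := [|| x < 4, n <= x + 4, y < 4 | n <= y + 4].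
Definition lattice_weight (n x y : nat) : nat :=
  if on_lattice x y then 4 else if in_border n x y then 1 else 0.
Definition lattice_dist n : distribution ('I_n * 'I_n)%type :=
  [ffun v : ('I_n * 'I_n)%type => lattice_weight n v.1 v.2].

Lemma lattice_dist_solvable n : solvable (@grid_adj n) (lattice_dist n).
Proof.
move=> [x y]; case hB: (in_border n x y).
  by left; rewrite ffunE /lattice_weight /= hB; case: ifP.
move/negbT: hB; rewrite !negb_or -!ltnNge => /and4P[x4 xn y4 yn].
have fit_i : x - 4 + 9 <= n by lia.
have fit_j : y - 4 + 9 <= n by lia.
have := @certificate_valid ((y - 4) %% 2) ((x - 4 + 6 * (y - 4)) %% 7).
rewrite !ltn_mod => /(_ isT isT); case E: run_moves => [g'|] // feeds_center.
have -> : (x, y) = embed (x - 4) (y - 4) (x, y) (4, 4).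
  by congr pair; apply: val_inj; rewrite /= val_insubd ifT //; lia.
apply: (reachable_of_run fit_i fit_j _ E) => // -[a b] hab.
rewrite lattice_windowE ffunE /lattice_weight.
by rewrite (embed_fst (x, y) fit_i fit_j hab) (embed_snd (x, y) fit_i fit_j hab); case: ifP.
Qed.

Lemma dsize_grid n (f : nat -> nat -> nat) :
  dsize [ffun v : ('I_n * 'I_n)%type => f v.1 v.2] = \sum_(0 <= i < n) \sum_(0 <= j < n) f i j.
Proof.
rewrite /dsize (eq_bigr (fun v : 'I_n * 'I_n => f v.1 v.2)) => [|v _]; last by rewrite ffunE.
rewrite -(pair_big xpredT xpredT (fun i j : 'I_n => f i j)) big_mkord.
by apply: eq_bigr => i _; rewrite big_mkord.
Qed.

Lemma sum_mod2_eq0 m : \sum_(0 <= x < m) (x %% 2 == 0 : nat) = m.+1 %/ 2.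
Proof. by elim: m => [|m IH]; rewrite ?big_nil // big_nat_recr //= IH; case: eqP; lia. Qed.

Lemma sum_mod7_eq0 c m :
  \sum_(0 <= x < m) ((x + c) %% 7 == 0 : nat) = (c + m + 6) %/ 7 - (c + 6) %/ 7.
Proof.
by elim: m => [|m IH]; rewrite ?big_nil; [lia | rewrite big_nat_recr //= IH; case: eqP; lia].
Qed.

Lemma sum_ltn m k : \sum_(0 <= x < m) (x < k : nat) = minn m k.
Proof.
by elim: m => [|m IH]; rewrite ?big_nil; [lia | rewrite big_nat_recr //= IH; case: ltnP; lia].
Qed.

Lemma sum_geq m k : \sum_(0 <= x < m) (k <= x : nat) = m - minn m k.
Proof.
by elim: m => [|m IH]; rewrite ?big_nil; [lia | rewrite big_nat_recr //= IH; case: leqP; lia].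
Qed.

Lemma lattice_count n :
  \sum_(0 <= i < n) \sum_(0 <= j < n) (on_lattice i j : nat) <= (n %/ 2 + 1) * (n %/ 7 + 1).
Proof.
rewrite exchange_big_nat.
apply: (@leq_trans (\sum_(0 <= j < n) (j %% 2 == 0) * (n %/ 7 + 1))).
  apply: leq_sum => j _; rewrite /on_lattice.
  case: (j %% 2 == 0); last by rewrite big1.
  rewrite (eq_bigr (fun i => ((i + 6 * j) %% 7 == 0 : nat))) // sum_mod7_eq0; lia.
by rewrite -big_distrl /= sum_mod2_eq0 leq_mul //; lia.
Qed.

Definition border_weight (n x : nat) : nat := (x < 4) + (n <= x + 4).

Lemma border_count n : \sum_(0 <= x < n) border_weight n x <= 8.
Proof.
rewrite big_split /= sum_ltn (eq_bigr (fun x => (n - 4 <= x : nat))) => [|x _].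
  by rewrite sum_geq; lia.
by congr nat_of_bool; apply/idP/idP; lia.
Qed.

Lemma lattice_weight_le n x y :
  lattice_weight n x y <= 4 * on_lattice x y + (border_weight n x + border_weight n y).
Proof.
rewrite /lattice_weight /border_weight /in_border.
by case: on_lattice; case: (x < 4); case: (n <= x + 4); case: (y < 4); case: (n <= y + 4).
Qed.

Lemma dsize_lattice_dist n : dsize (lattice_dist n) <= 4 * ((n %/ 2 + 1) * (n %/ 7 + 1)) + 16 * n.
Proof.
rewrite dsize_grid.
apply: (@leq_trans (\sum_(0 <= i < n) \sum_(0 <= j < n)
    (4 * on_lattice i j + (border_weight n i + border_weight n j)))).
  by apply: leq_sum => i _; apply: leq_sum => j _; exact: lattice_weight_le.
under eq_bigr => i _ do rewrite big_split /= -big_distrr /= big_split /= sum_nat_const_nat subn0.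
rewrite big_split /= -big_distrr /= big_split /= sum_nat_const_nat subn0 -big_distrr /=.
have := lattice_count n; have := border_count n; nia.
Qed.

Lemma pi_opt_le_dsize (V : finType) (e : rel V) (D : distribution V) :
  solvable e D -> pi_opt e <= dsize D.
Proof. by move=> sD; rewrite /pi_opt; case: ex_minnP => m _; apply; apply/asboolP; exists D. Qed.

Lemma pebble_steps_empty (V : finType) (e : rel V) (D D' : distribution V) :
  pebble_steps e D D' -> (forall v, D v = 0) -> forall v, D' v = 0.
Proof.
elim => [D1 D2 [v [u [_ [D1v _]]]] | // | D1 D2 D3 _ IH12 _ IH23] D0; last by apply/IH23/IH12.
by rewrite D0 in D1v.
Qed.

Lemma pi_opt_gt0 (V : finType) (e : rel V) : 0 < #|V| -> 0 < pi_opt e.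
Proof.
case/card_gt0P=> v0 _; rewrite /pi_opt; case: ex_minnP => m /asboolP[D [sD <-]] _.
rewrite lt0n; apply/negP => /eqP D0.
have Dz v : D v = 0 by apply/eqP; rewrite -leqn0 -D0 /dsize (bigD1 v) //= leq_addr.
case: (sD v0) => [|[D' [u [st [_ D'u]]]]]; first by rewrite Dz.
by rewrite (pebble_steps_empty st Dz) in D'u.
Qed.

Lemma pi_opt_grid_le n : 0 < n -> 7 * pi_opt_grid n <= 2 * n ^ 2 + 160 * n.
Proof.
move=> n0; have := leq_trans (pi_opt_le_dsize (@lattice_dist_solvable n)) (dsize_lattice_dist n).
have := leq_mul (leq_divM n 2) (leq_divM n 7).
have := leq_divM n 2; have := leq_divM n 7.
rewrite /pi_opt_grid; move: (n %/ 2) (n %/ 7) => a b; nia.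
Qed.

Lemma pi_opt_grid_gt0 n : 0 < n -> 0 < pi_opt_grid n.
Proof. by move=> n0; apply: pi_opt_gt0; rewrite card_prod card_ord muln_gt0 n0. Qed.

Section Asymptotics.
Import Order.TTheory GRing.Theory Num.Theory.
Local Open Scope ring_scope.

Lemma ratio_deficit_le (R : realFieldType) (a b e P k : R) :
  0 < e -> 0 <= b -> 0 <= P -> 0 <= k -> a * b <= e * k ->
  a * P <= k ^+ 2 + b * k -> (a - e) * P <= k ^+ 2.
Proof.
move=> e0 b0 P0 k0 abek aP.
have [ae|ae] := leP (a - e) 0.
  by apply: le_trans (sqr_ge0 k); apply: mulr_le0_ge0.
have a0 : 0 < a by lra.
suff : a * ((a - e) * P) <= a * k ^+ 2 by rewrite ler_pM2l.
nra.
Qed.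

Lemma limn_einf_sqr_div_ge (R : realType) (c d b : nat) (u : nat -> nat) :
  (0 < d)%N -> (forall n, 0 < n -> 0 < u n)%N ->
  (forall n, 0 < n -> c * u n <= d * n ^ 2 + b * n)%N ->
  ((c%:R / d%:R : R)%:E <= limn_einf (fun n => ((n ^ 2)%:R / (u n)%:R : R)%:E))%E.
Proof.
move=> d0 u_gt0 u_le; rewrite limn_einf_lim; apply/lee_subgt0Pr => e e0.
apply: lime_ge; first exact: is_cvg_einfs.
have dR : 0 < d%:R :> R by rewrite ltr0n.
pose K := (Num.truncn (c%:R / d%:R * (b%:R / d%:R) / e : R)).+1.
exists K => // m /= Km; apply: le_ereal_inf_tmp => _ [k /= mk <-].
have Kk : (K <= k)%N by apply: leq_trans Km mk.
have k0 : (0 < k)%N by apply: leq_trans Kk.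
rewrite -EFinB lee_fin ler_pdivlMr ?ltr0n ?u_gt0 // natrX.
apply: (ratio_deficit_le (b := b%:R / d%:R)) => //.
- apply: ltW; rewrite -ltr_pdivrMl // mulrC.
  apply: lt_le_trans (truncnS_gt _) _; rewrite ler_nat.
  exact: Kk.
- have -> : c%:R / d%:R * (u k)%:R = (c * u k)%:R / d%:R :> R by rewrite natrM mulrAC.
  have -> : k%:R ^+ 2 + b%:R / d%:R * k%:R = (d * k ^ 2 + b * k)%:R / d%:R :> R.
    by rewrite natrD !natrM ?natrX; field; rewrite gt_eqF.
  by rewrite ler_pM2r ?invr_gt0 // ler_nat u_le.
Qed.

End Asymptotics.

Theorem mainTheorem2 (R : realType) :
  ((7%:R / 2%:R : R)%:E <=
   limn_einf (fun n : nat => ((n ^ 2)%:R / (pi_opt_grid n)%:R : R)%:E))%E.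
Proof.
apply: limn_einf_sqr_div_ge => // n n0.
- exact: pi_opt_grid_gt0.
- exact: pi_opt_grid_le.
Qed.
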